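(* Let $a\in C^2([0,T]\times[-\pi,\pi])$ solve $$\partial_t a+\Big(\int_{-\pi}^x a(t,\bar x)\,d\bar x\Big)\partial_x a-a^2+\frac1\pi\int_{-\pi}^{\pi}a^2\,dx=0,\qquad \int_{-\pi}^\pi a(t,x)dx=0,$$ and set $a_0=a(0,\cdot)$. Assume $a_0$ attains its maximum at an interior point $x_0^*\in(-\pi,\pi)$. Then for all $t\in[0,T]$, $x\mapsto a(t,x)$ attains its maximum at $x^*(t)$, the characteristic starting from $x_0^*$, and moreover $\partial_xa(t,x^*(t))=0$ and $\partial_x^2a(t,x^*(t))=\partial_x^2a_0(x_0^* )$.
   Context: The characteristic starting from $x_0^*$ is the solution of $\frac{d}{dt}x^*(t)=\int_{-\pi}^{x^*(t)}a(t,x)\,dx$, $x^*(0)=x_0^*$. *)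

From Stdlib Require Import Reals.
From Coquelicot Require Import Coquelicot.
Open Scope R_scope.

Definition dX (f : R -> R -> R) : R -> R -> R :=
  fun t x => Derive (fun y => f t y) x.
Definition dT (f : R -> R -> R) : R -> R -> R :=
  fun t x => Derive (fun s => f s x) t.

Definition in_rect (T t x : R) : Prop := 0 <= t <= T /\ - PI <= x <= PI.

Definition cont2 (f : R -> R -> R) (t x : R) : Prop :=
  continuous (fun p : R * R => f (fst p) (snd p)) (t, x).

Definition C1_on_rect (T : R) (f : R -> R -> R) : Prop :=
  forall t x, in_rect T t x ->
    ex_derive (fun y => f t y) x /\ ex_derive (fun s => f s x) t /\
    cont2 f t x /\ cont2 (dX f) t x /\ cont2 (dT f) t x.

Definition C2_on_rect (T : R) (a : R -> R -> R) : Prop :=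
  C1_on_rect T a /\ C1_on_rect T (dX a) /\ C1_on_rect T (dT a).

Definition solves_eq (T : R) (a : R -> R -> R) : Prop :=
  (forall t x, in_rect T t x ->
     dT a t x + RInt (fun y => a t y) (- PI) x * dX a t x - (a t x) ^ 2
       + / PI * RInt (fun y => (a t y) ^ 2) (- PI) PI = 0) /\
  (forall t, 0 <= t <= T -> RInt (fun y => a t y) (- PI) PI = 0).

Definition characteristic (T : R) (a : R -> R -> R) (x0 : R) (xs : R -> R) : Prop :=
  xs 0 = x0 /\
  (forall t, 0 <= t <= T ->
     filterlim xs (within (fun s => 0 <= s <= T) (locally t)) (locally (xs t))) /\
  (forall t, 0 <= t <= T -> - PI <= xs t <= PI) /\
  (forall t, 0 < t < T ->
     is_derive xs t (RInt (fun y => a t y) (- PI) (xs t))).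

Definition max_at (a : R -> R -> R) (t xt : R) : Prop :=
  forall x, - PI <= x <= PI -> a t x <= a t xt.

(* Along a characteristic X the value w(t) = a(t, X(t)) solves the Riccati
   equation w' = w^2 - I(t), where I(t) = (1/pi) int a(t,.)^2 is the same for all
   characteristics.  Hence the difference of w along two characteristics solves a
   linear equation and keeps its sign: the order of the values of a(0,.) is
   transported by the flow.  The flow map fixes -pi and pi (the velocity
   u(t,x) = int_{-pi}^x a(t,.) vanishes there), so by continuity it is onto, and
   a(t,.) is maximal at xs(t), where d_x a then vanishes.
   For the second derivative let Y be the characteristic from x0 + h.  The quotient
   (a(t,Y) - a(t,xs)) / (Y - xs)^2 solves a linear equation with coefficient
   a(t,Y) + a(t,xs) - 2 (u(t,Y) - u(t,xs)) / (Y - xs), which tends to 0 with h,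
   while by Taylor's formula the quotient tends to d_x^2 a / 2 both at time 0 and
   at time t.  Characteristics exist by Picard iteration. *)

From Stdlib Require Import Reals Lra Lia.
From Coquelicot Require Import Coquelicot.
Open Scope R_scope.

Lemma exp_le_compat x y : x <= y -> exp x <= exp y.
Proof. intros [H|<-]; [left; exact (exp_increasing _ _ H)|right; reflexivity]. Qed.

Lemma is_derive_continuity_pt (f : R -> R) (x l : R) : is_derive f x l -> continuity_pt f x.
Proof.
  intros H. apply continuity_pt_filterlim.
  apply (ex_derive_continuous (K := R_AbsRing) (V := R_NormedModule)). now exists l.
Qed.

Lemma is_derive_eq (f : R -> R) (x l l' : R) : is_derive f x l -> l = l' -> is_derive f x l'.
Proof. now intros H <-. Qed.

Lemma is_derive_Rmult (f g : R -> R) (x df dg : R) : is_derive f x df -> is_derive g x dg ->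
  is_derive (fun t => f t * g t) x (df * g x + f x * dg).
Proof. rewrite !is_derive_Reals. apply derivable_pt_lim_mult. Qed.

Lemma is_derive_Rcomp (f g : R -> R) (x df dg : R) : is_derive f (g x) df -> is_derive g x dg ->
  is_derive (fun t => f (g t)) x (df * dg).
Proof. rewrite !is_derive_Reals. intros Hf Hg. exact (derivable_pt_lim_comp g f x dg df Hg Hf). Qed.

Lemma is_derive_Rminus (f g : R -> R) (x df dg : R) : is_derive f x df -> is_derive g x dg ->
  is_derive (fun t => f t - g t) x (df - dg).
Proof. rewrite !is_derive_Reals. apply derivable_pt_lim_minus. Qed.

Lemma is_derive_const_plus (f : R -> R) (c x l : R) : is_derive f x l ->
  is_derive (fun t => c + f t) x l.
Proof.
  rewrite !is_derive_Reals. intros H. replace l with (0 + l) by ring.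
  exact (derivable_pt_lim_plus _ f x 0 l (derivable_pt_lim_const c x) H).
Qed.

Lemma eq_of_Rabs_le_0 x y : Rabs (x - y) <= 0 -> x = y.
Proof. intros H. pose proof (Rabs_pos (x - y)). apply Rminus_diag_uniq, Rabs_eq_0. lra. Qed.

(** * Continuity relative to a set *)

Definition cont_in (D : R -> Prop) (f : R -> R) (t : R) : Prop :=
  forall eps, 0 < eps -> exists del, 0 < del /\
    forall s, D s -> Rabs (s - t) < del -> Rabs (f s - f t) < eps.

Lemma cont_in_filterlim D f t :
  cont_in D f t <-> filterlim f (within D (locally t)) (locally (f t)).
Proof.
  split.
  - intros H P [e He]. destruct (H e (cond_pos e)) as [d [Hd Hfd]].
    exists (mkposreal d Hd). intros s Hs HDs. apply He, Hfd; assumption.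
  - intros H eps Heps.
    assert (Hball : locally (f t) (fun y => Rabs (y - f t) < eps))
      by now exists (mkposreal eps Heps).
    destruct (H _ Hball) as [d Hd].
    exists d. split; [apply cond_pos|]. intros s HDs Hs. now apply Hd.
Qed.

Lemma continuity_pt_cont_in f t : continuity_pt f t <-> cont_in (fun _ => True) f t.
Proof.
  split.
  - intros H eps Heps. destruct (H eps Heps) as [d [Hd Hfd]]. exists d. split; [exact Hd|].
    intros s _ Hs. destruct (Req_dec s t) as [->|Hne].
    + rewrite Rminus_diag, Rabs_R0. exact Heps.
    + apply (Hfd s). split; [split; [exact I|congruence]|exact Hs].
  - intros H eps Heps. destruct (H eps Heps) as [d [Hd Hfd]]. exists d. split; [exact Hd|].
    intros s [_ Hs]. now apply Hfd.
Qed.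

Lemma cont_in_continuity_pt D f t : continuity_pt f t -> cont_in D f t.
Proof.
  intros H eps Heps. destruct (proj1 (continuity_pt_cont_in f t) H eps Heps) as [d [Hd Hfd]].
  exists d. split; [exact Hd|]. intros s _. now apply Hfd.
Qed.

Lemma cont_in_comp_2d D (f g : R -> R) (h : R -> R -> R) t :
  cont_in D f t -> cont_in D g t -> continuity_2d_pt h (f t) (g t) ->
  cont_in D (fun s => h (f s) (g s)) t.
Proof.
  intros Hf Hg Hh eps Heps.
  destruct (Hh (mkposreal eps Heps)) as [d Hd].
  destruct (Hf d (cond_pos d)) as [d1 [Hd1 Hfd1]].
  destruct (Hg d (cond_pos d)) as [d2 [Hd2 Hgd2]].
  exists (Rmin d1 d2). split; [now apply Rmin_pos|].
  intros s HDs Hs. apply Hd.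
  - apply Hfd1; [exact HDs|]. apply Rlt_le_trans with (1 := Hs), Rmin_l.
  - apply Hgd2; [exact HDs|]. apply Rlt_le_trans with (1 := Hs), Rmin_r.
Qed.

Lemma cont_in_comp D (f h : R -> R) t :
  cont_in D f t -> continuity_pt h (f t) -> cont_in D (fun s => h (f s)) t.
Proof.
  intros Hf Hh. apply (cont_in_comp_2d D f f (fun u _ => h u)); [exact Hf|exact Hf|].
  apply (continuity_1d_2d_pt_comp h (fun u _ => u)); [exact Hh|apply continuity_2d_pt_id1].
Qed.

Lemma cont_in_mult D f g t : cont_in D f t -> cont_in D g t -> cont_in D (fun s => f s * g s) t.
Proof.
  intros Hf Hg. apply (cont_in_comp_2d D f g Rmult); [exact Hf|exact Hg|].
  apply continuity_2d_pt_mult; [apply continuity_2d_pt_id1|apply continuity_2d_pt_id2].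
Qed.

Lemma cont_in_minus D f g t : cont_in D f t -> cont_in D g t -> cont_in D (fun s => f s - g s) t.
Proof.
  intros Hf Hg. apply (cont_in_comp_2d D f g Rminus); [exact Hf|exact Hg|].
  apply continuity_2d_pt_minus; [apply continuity_2d_pt_id1|apply continuity_2d_pt_id2].
Qed.

Lemma continuity_pt_comp_2d (f g : R -> R) (h : R -> R -> R) x :
  continuity_pt f x -> continuity_pt g x -> continuity_2d_pt h (f x) (g x) ->
  continuity_pt (fun t => h (f t) (g t)) x.
Proof. rewrite !continuity_pt_cont_in. apply cont_in_comp_2d. Qed.

Lemma cont_in_inv D f t : cont_in D f t -> f t <> 0 -> cont_in D (fun s => / f s) t.
Proof.
  intros Hf Hne. apply (cont_in_comp D f Rinv); [exact Hf|].
  apply (continuity_pt_inv (fun z => z)); [apply continuity_pt_id|exact Hne].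
Qed.

(** * Linear differential inequalities *)

Notation in_0T T := (fun s => 0 <= s <= T).

(* [MVT_gen] needs two-sided continuity, so it is applied on [u, v] with u
   close to 0 and v close to t. *)
Lemma le_of_derive_nonpos (T : R) (f df : R -> R) :
  (forall t, 0 <= t <= T -> cont_in (in_0T T) f t) ->
  (forall t, 0 < t < T -> is_derive f t (df t)) -> (forall t, 0 < t < T -> df t <= 0) ->
  forall t, 0 <= t <= T -> f t <= f 0.
Proof.
  intros Hc Hd Hneg t Ht.
  destruct (Req_dec t 0) as [->|Ht0]; [lra|].
  apply Rnot_lt_le; intro Hlt.
  set (eps := (f t - f 0) / 4). assert (Heps : 0 < eps) by (unfold eps; lra).
  destruct (Hc 0 ltac:(lra) eps Heps) as [d0 [Hd0 Hfd0]].
  destruct (Hc t Ht eps Heps) as [dt [Hdt Hfdt]].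
  set (u := Rmin d0 t / 2).
  assert (Hu : 0 < u /\ u < d0 /\ u < t)
    by (unfold u; pose proof (Rmin_l d0 t); pose proof (Rmin_r d0 t);
        pose proof (Rmin_pos d0 t Hd0 ltac:(lra)); lra).
  set (v := t - Rmin dt (t - u) / 2).
  assert (Hv : u < v < t /\ t - v < dt)
    by (unfold v; pose proof (Rmin_l dt (t - u)); pose proof (Rmin_r dt (t - u));
        pose proof (Rmin_pos dt (t - u) Hdt ltac:(lra)); lra).
  destruct (MVT_gen f u v df) as [c [Hcuv Hmvt]].
  - intros x Hx. rewrite Rmin_left, Rmax_right in Hx by lra. apply Hd. lra.
  - intros x Hx. rewrite Rmin_left, Rmax_right in Hx by lra.
    apply is_derive_continuity_pt with (df x). apply Hd. lra.
  - rewrite Rmin_left, Rmax_right in Hcuv by lra.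
    assert (Hdec : df c * (v - u) <= 0) by (assert (df c <= 0) by (apply Hneg; lra); nra).
    assert (Hu0 : Rabs (f u - f 0) < eps)
      by (apply Hfd0; [lra|rewrite Rminus_0_r, Rabs_pos_eq; lra]).
    assert (Hvt : Rabs (f v - f t) < eps) by (apply Hfdt; [lra|rewrite Rabs_left1; lra]).
    apply Rabs_def2 in Hu0. apply Rabs_def2 in Hvt. unfold eps in *. lra.
Qed.

Definition pos_sq (y : R) := Rmax y 0 * Rmax y 0.

Lemma is_derive_pos_sq y : is_derive pos_sq y (2 * Rmax y 0).
Proof.
  destruct (Rlt_or_le 0 y) as [Hy|Hy]; [|destruct (Req_dec y 0) as [->|Hy0]].
  - rewrite Rmax_left by lra.
    apply (is_derive_ext_loc (fun z => z * z)); [|auto_derive; [exact I|ring]].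
    exists (mkposreal y Hy). intros z Hz. change (Rabs (z - y) < y) in Hz.
    apply Rabs_def2 in Hz. unfold pos_sq. rewrite Rmax_left; [reflexivity|lra].
  - rewrite Rmax_right, Rmult_0_r by lra. apply is_derive_Reals.
    intros eps Heps. exists (mkposreal eps Heps). intros h Hh0 Hh. simpl in Hh.
    unfold pos_sq. rewrite Rplus_0_l, (Rmax_right 0 0), Rminus_0_r by lra.
    destruct (Rle_dec h 0).
    + rewrite Rmax_right by lra. replace ((0 * 0 - 0 * 0) / h) with 0 by (field; exact Hh0).
      now rewrite Rabs_R0.
    + rewrite Rmax_left by lra. now replace ((h * h - 0 * 0) / h) with h by (field; exact Hh0).
  - rewrite Rmax_right, Rmult_0_r by lra.
    apply (is_derive_ext_loc (fun _ => 0)); [|apply (is_derive_const (K := R_AbsRing) (V := R_NormedModule))].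
    exists (mkposreal (- y) ltac:(lra)). intros z Hz. change (Rabs (z - y) < - y) in Hz.
    apply Rabs_def2 in Hz. unfold pos_sq. rewrite Rmax_right, Rmult_0_l; [reflexivity|lra].
Qed.

Section LinearODE.

Variables (T K : R) (g c : R -> R).
Hypothesis g_cont : forall t, 0 <= t <= T -> cont_in (in_0T T) g t.
Hypothesis g_deriv : forall s, 0 < s < T -> is_derive g s (c s * g s).
Hypothesis c_bound : forall s, 0 < s < T -> Rabs (c s) <= K.

Lemma weighted_le (phi dphi : R -> R) (k : R) :
  (forall y, is_derive phi y (dphi y)) ->
  (forall s, 0 < s < T -> dphi (g s) * (c s * g s) + k * phi (g s) <= 0) ->
  forall t, 0 <= t <= T -> phi (g t) * exp (k * t) <= phi (g 0).
Proof.
  intros Hphi Hneg t Ht.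
  replace (phi (g 0)) with (phi (g 0) * exp (k * 0)) by (rewrite Rmult_0_r, exp_0; ring).
  apply (le_of_derive_nonpos T (fun s => phi (g s) * exp (k * s))
    (fun s => (dphi (g s) * (c s * g s) + k * phi (g s)) * exp (k * s))); [| |intros s Hs|exact Ht].
  - intros u Hu. apply cont_in_mult.
    + apply (cont_in_comp _ g); [now apply g_cont|].
      apply is_derive_continuity_pt with (dphi (g u)), Hphi.
    + apply cont_in_continuity_pt, (is_derive_continuity_pt _ _ (k * exp (k * u))).
      auto_derive; [exact I|ring].
  - intros s Hs. eapply is_derive_eq.
    + apply (is_derive_Rmult (fun s => phi (g s)) (fun s => exp (k * s)));
        [apply (is_derive_Rcomp phi g); [apply Hphi|now apply g_deriv]|auto_derive; reflexivity].
    + ring.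
  - pose proof (exp_pos (k * s)). pose proof (Hneg s Hs). nra.
Qed.

Lemma linear_ode_sq_le t : 0 <= t <= T -> g t * g t * exp (- (2 * K) * t) <= g 0 * g 0.
Proof.
  apply (weighted_le (fun z => z * z) (fun z => 2 * z)).
  - intros y. auto_derive; [exact I|ring].
  - intros s Hs. pose proof (proj1 (Rabs_le_between _ _) (c_bound s Hs)). nra.
Qed.

Lemma linear_ode_sq_ge t : 0 <= t <= T -> g 0 * g 0 <= g t * g t * exp (2 * K * t).
Proof.
  intros Ht. enough (- (g t * g t) * exp (2 * K * t) <= - (g 0 * g 0)) by lra.
  revert t Ht. apply (weighted_le (fun z => - (z * z)) (fun z => - (2 * z))).
  - intros y. auto_derive; [exact I|ring].
  - intros s Hs. pose proof (proj1 (Rabs_le_between _ _) (c_bound s Hs)). nra.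
Qed.

Lemma linear_ode_nonpos t : 0 <= t <= T -> g 0 <= 0 -> g t <= 0.
Proof.
  intros Ht Hg0.
  assert (Hw := weighted_le pos_sq (fun y => 2 * Rmax y 0) (- (2 * K)) is_derive_pos_sq).
  unfold pos_sq in Hw. rewrite (Rmax_right (g 0)), Rmult_0_r in Hw by exact Hg0.
  apply Rnot_lt_le. intros Hgt.
  assert (0 < Rmax (g t) 0 * Rmax (g t) 0 * exp (- (2 * K) * t))
    by (rewrite Rmax_left by lra; apply Rmult_lt_0_compat; [nra|apply exp_pos]).
  enough (Rmax (g t) 0 * Rmax (g t) 0 * exp (- (2 * K) * t) <= 0) by lra.
  apply Hw; [|exact Ht]. intros s Hs.
  pose proof (proj1 (Rabs_le_between _ _) (c_bound s Hs)).
  unfold Rmax. destruct (Rle_dec (g s) 0); nra.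
Qed.

End LinearODE.

Section LinearODEBounds.

Variables (T K : R) (g c : R -> R).
Hypothesis K_ge0 : 0 <= K.
Hypothesis g_cont : forall t, 0 <= t <= T -> cont_in (in_0T T) g t.
Hypothesis g_deriv : forall s, 0 < s < T -> is_derive g s (c s * g s).
Hypothesis c_bound : forall s, 0 < s < T -> Rabs (c s) <= K.

Lemma linear_ode_nonneg t : 0 <= t <= T -> 0 <= g 0 -> 0 <= g t.
Proof.
  intros Ht Hg0. enough (- g t <= 0) by lra.
  apply (linear_ode_nonpos T K (fun s => - g s) c); [| |exact c_bound|exact Ht|lra].
  - intros u Hu. apply (cont_in_comp _ g Ropp); [now apply g_cont|].
    apply continuity_pt_opp, continuity_pt_id.
  - intros s Hs. apply (is_derive_eq _ _ (- (c s * g s))); [|ring].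
    apply (is_derive_opp (K := R_AbsRing) (V := R_NormedModule)), g_deriv, Hs.
Qed.

Lemma linear_ode_abs_le t : 0 <= t <= T -> Rabs (g t) <= Rabs (g 0) * exp (K * t).
Proof.
  intros Ht. assert (Hsq := linear_ode_sq_le T K g c g_cont g_deriv c_bound t Ht).
  set (E := exp (K * t)). assert (HE : 0 < E) by apply exp_pos.
  replace (exp (- (2 * K) * t)) with (/ (E * E)) in Hsq
    by (unfold E; rewrite <- exp_plus, <- exp_Ropp; f_equal; ring).
  assert (H : g t * g t <= (g 0 * E) * (g 0 * E)).
  { apply Rmult_le_compat_r with (r := E * E) in Hsq; [|nra].
    replace (g t * g t * / (E * E) * (E * E)) with (g t * g t) in Hsq by (field; lra). lra. }
  apply Rsqr_le_abs_0 in H. now rewrite Rabs_mult, (Rabs_pos_eq E) in H by lra.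
Qed.

Lemma linear_ode_abs_ge t : 0 <= t <= T -> Rabs (g 0) * exp (- (K * t)) <= Rabs (g t).
Proof.
  intros Ht. assert (Hsq := linear_ode_sq_ge T K g c g_cont g_deriv c_bound t Ht).
  set (E := exp (K * t)). assert (HE : 0 < E) by apply exp_pos.
  replace (exp (2 * K * t)) with (E * E) in Hsq by (unfold E; rewrite <- exp_plus; f_equal; ring).
  assert (H : g 0 * g 0 <= (g t * E) * (g t * E)) by lra.
  apply Rsqr_le_abs_0 in H. rewrite Rabs_mult, (Rabs_pos_eq E) in H by lra.
  rewrite exp_Ropp. fold E. apply Rmult_le_reg_r with E; [exact HE|].
  now replace (Rabs (g 0) * / E * E) with (Rabs (g 0)) by (field; lra).
Qed.

Lemma linear_ode_drift t : 0 <= t <= T -> Rabs (g t - g 0) <= Rabs (g 0) * (exp (K * T) - 1).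
Proof.
  intros Ht.
  assert (Hup := linear_ode_abs_le t Ht). assert (Hlo := linear_ode_abs_ge t Ht).
  rewrite exp_Ropp in Hlo. set (E := exp (K * t)) in *.
  assert (HE : 1 <= E) by (unfold E; rewrite <- exp_0; apply exp_le_compat; nra).
  assert (HET : E <= exp (K * T)) by (unfold E; apply exp_le_compat; nra).
  (* E + 1/E >= 2 *)
  assert (Hinv : Rabs (g 0) * / E >= Rabs (g 0) * (2 - E)).
  { apply Rmult_ge_compat_l; [apply Rle_ge, Rabs_pos|].
    apply Rle_ge, Rmult_le_reg_r with E; [lra|].
    replace (/ E * E) with 1 by (field; lra). nra. }
  destruct (Rle_or_lt 0 (g 0)) as [Hg0|Hg0].
  - pose proof (linear_ode_nonneg t Ht Hg0).
    rewrite (Rabs_pos_eq (g 0)), (Rabs_pos_eq (g t)) in * by lra.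
    apply Rabs_le. split; nra.
  - pose proof (linear_ode_nonpos T K g c g_cont g_deriv c_bound t Ht ltac:(lra)).
    rewrite (Rabs_left1 (g 0)), (Rabs_left1 (g t)) in * by lra.
    apply Rabs_le. split; nra.
Qed.

End LinearODEBounds.

(* Difference quotient, with the junk value 0 on the diagonal. *)
Definition dquot (f : R -> R) (u v : R) : R :=
  if Req_EM_T u v then 0 else (f u - f v) / (u - v).

Lemma dquot_spec f u v : f u - f v = dquot f u v * (u - v).
Proof.
  unfold dquot. destruct (Req_EM_T u v) as [->|Huv]; [ring|]. field. lra.
Qed.

Lemma Rabs_dquot_le f L u v : 0 <= L -> Rabs (f u - f v) <= L * Rabs (u - v) ->
  Rabs (dquot f u v) <= L.
Proof.
  intros HL Hf. unfold dquot. destruct (Req_EM_T u v) as [->|Huv]; [now rewrite Rabs_R0|].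
  assert (Hpos : 0 < Rabs (u - v)) by (apply Rabs_pos_lt; lra).
  unfold Rdiv. rewrite Rabs_mult, Rabs_inv.
  apply Rmult_le_reg_r with (Rabs (u - v)); [exact Hpos|].
  now rewrite Rmult_assoc, Rinv_l, Rmult_1_r by lra.
Qed.

Section LipschitzODE.

Variables (T L : R) (G : R -> R -> R) (X1 X2 : R -> R).
Hypothesis L_ge0 : 0 <= L.
Hypothesis G_lip : forall s, 0 < s < T -> Rabs (G s (X1 s) - G s (X2 s)) <= L * Rabs (X1 s - X2 s).
Hypothesis X1_cont : forall t, 0 <= t <= T -> cont_in (in_0T T) X1 t.
Hypothesis X2_cont : forall t, 0 <= t <= T -> cont_in (in_0T T) X2 t.
Hypothesis X1_deriv : forall s, 0 < s < T -> is_derive X1 s (G s (X1 s)).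
Hypothesis X2_deriv : forall s, 0 < s < T -> is_derive X2 s (G s (X2 s)).

Let gap s := X1 s - X2 s.
Let rate s := dquot (G s) (X1 s) (X2 s).

Let gap_cont t : 0 <= t <= T -> cont_in (in_0T T) gap t.
Proof. intros Ht. apply cont_in_minus; [apply X1_cont|apply X2_cont]; exact Ht. Qed.

Let gap_deriv s : 0 < s < T -> is_derive gap s (rate s * gap s).
Proof.
  intros Hs. apply (is_derive_eq _ _ (G s (X1 s) - G s (X2 s))); [|apply dquot_spec].
  apply is_derive_Rminus; [apply X1_deriv|apply X2_deriv]; exact Hs.
Qed.

Let rate_bound s : 0 < s < T -> Rabs (rate s) <= L.
Proof. intros Hs. apply Rabs_dquot_le; [exact L_ge0|apply G_lip, Hs]. Qed.

Lemma ode_gap_le t : 0 <= t <= T -> Rabs (X1 t - X2 t) <= Rabs (X1 0 - X2 0) * exp (L * t).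
Proof. exact (linear_ode_abs_le T L gap rate gap_cont gap_deriv rate_bound t). Qed.

Lemma ode_gap_ge t : 0 <= t <= T -> Rabs (X1 0 - X2 0) * exp (- (L * t)) <= Rabs (X1 t - X2 t).
Proof. exact (linear_ode_abs_ge T L gap rate gap_cont gap_deriv rate_bound t). Qed.

Lemma ode_order t : 0 <= t <= T -> X2 0 <= X1 0 -> X2 t <= X1 t.
Proof.
  intros Ht H0. enough (0 <= gap t) by (unfold gap in *; lra).
  apply (linear_ode_nonneg T L gap rate gap_cont gap_deriv rate_bound t Ht). unfold gap. lra.
Qed.

End LipschitzODE.

(** * Mean value, Taylor and integral estimates *)

Lemma Rabs_between (u v z : R) : Rmin u v <= z <= Rmax u v -> Rabs (z - u) <= Rabs (v - u).
Proof. rewrite Rmin_comm, Rmax_comm. apply Rabs_le_between_min_max. Qed.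

Lemma MVT_abs_le (f df : R -> R) (u v C : R) :
  (forall x, Rmin u v <= x <= Rmax u v -> is_derive f x (df x)) ->
  (forall x, Rmin u v <= x <= Rmax u v -> Rabs (df x) <= C) ->
  Rabs (f v - f u) <= C * Rabs (v - u).
Proof.
  intros Hd Hb. destruct (MVT_abs f df u v) as [x [-> Hx]].
  - intros x Hx. apply is_derive_Reals, Hd, Hx.
  - apply Rmult_le_compat_r; [apply Rabs_pos|now apply Hb].
Qed.

Lemma taylor_quotient (f : R -> R) (c r : R) : 0 < r ->
  (forall y, Rabs (y - c) < r -> ex_derive f y) ->
  ex_derive (Derive f) c -> Derive f c = 0 ->
  forall eps, 0 < eps -> exists del, 0 < del /\ forall h, h <> 0 -> Rabs h < del ->
    Rabs ((f (c + h) - f c) / (h * h) - Derive (Derive f) c / 2) <= eps.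
Proof.
  intros Hr Hf Hf2 Hf0 eps Heps.
  set (L := Derive (Derive f) c).
  assert (HL : derivable_pt_lim (Derive f) c L) by apply is_derive_Reals, Derive_correct, Hf2.
  destruct (HL eps Heps) as [d Hd].
  exists (Rmin d r). split; [apply Rmin_pos; [apply cond_pos|exact Hr]|].
  intros h Hh0 Hh.
  assert (Hseg : forall z, Rmin c (c + h) <= z <= Rmax c (c + h) -> Rabs (z - c) <= Rabs h)
    by (intros z Hz; replace (Rabs h) with (Rabs (c + h - c)) by (f_equal; ring); now apply Rabs_between).
  assert (Hhd : Rabs h < d) by (eapply Rlt_le_trans; [exact Hh|apply Rmin_l]).
  assert (Hhr : Rabs h < r) by (eapply Rlt_le_trans; [exact Hh|apply Rmin_r]).
  assert (Hmvt := MVT_abs_le (fun y => f y - L * (y - c) * (y - c) / 2)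
                    (fun y => Derive f y - L * (y - c)) c (c + h) (eps * Rabs h)).
  replace (c + h - c) with h in Hmvt by ring.
  replace ((f (c + h) - f c) / (h * h) - L / 2) with
    ((f (c + h) - L * (c + h - c) * (c + h - c) / 2 - (f c - L * (c - c) * (c - c) / 2)) / (h * h))
    by (field; exact Hh0).
  unfold Rdiv. rewrite Rabs_mult, Rabs_inv, Rabs_mult.
  apply Rmult_le_reg_r with (Rabs h * Rabs h); [apply Rmult_lt_0_compat; now apply Rabs_pos_lt|].
  rewrite Rmult_assoc, Rinv_l, Rmult_1_r by (apply Rmult_integral_contrapositive; split; now apply Rabs_no_R0).
  rewrite <- Rmult_assoc. apply Hmvt.
  - intros z Hz. apply (is_derive_Rminus f).
    + apply Derive_correct, Hf. pose proof (Hseg z Hz). lra.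
    + auto_derive; [exact I|field].
  - intros z Hz. destruct (Req_dec z c) as [->|Hzc].
    + rewrite Hf0, Rminus_diag, Rmult_0_r, Rminus_diag, Rabs_R0.
      apply Rmult_le_pos; [lra|apply Rabs_pos].
    + assert (Hk : z - c <> 0) by lra. pose proof (Hseg z Hz).
      specialize (Hd (z - c) Hk ltac:(simpl; lra)).
      replace (c + (z - c)) with z in Hd by ring. rewrite Hf0, Rminus_0_r in Hd.
      replace (Derive f z - L * (z - c)) with ((Derive f z / (z - c) - L) * (z - c)) by (field; exact Hk).
      rewrite Rabs_mult. apply Rmult_le_compat; try apply Rabs_pos; lra.
Qed.

Lemma differentiable_pt_lim_of_partials (f : R -> R -> R) (x y : R) :
  locally_2d (fun u v => ex_derive (fun z => f z v) u) x y ->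
  continuity_2d_pt (fun u v => Derive (fun z => f z v) u) x y ->
  ex_derive (fun z => f x z) y ->
  differentiable_pt_lim f x y (Derive (fun z => f z y) x) (Derive (fun z => f x z) y).
Proof.
  intros [d0 Hd0] Hc Hy eps.
  set (lx := Derive (fun z => f z y) x). set (ly := Derive (fun z => f x z) y).
  assert (He2 : 0 < eps / 2) by (pose proof (cond_pos eps); lra).
  destruct (Hc (mkposreal _ He2)) as [d1 Hd1].
  assert (Hly : derivable_pt_lim (fun z => f x z) y ly) by apply is_derive_Reals, Derive_correct, Hy.
  destruct (Hly _ He2) as [d2 Hd2].
  assert (Hd : 0 < Rmin d0 (Rmin d1 d2)) by (repeat apply Rmin_pos; apply cond_pos).
  exists (mkposreal _ Hd). simpl. intros u v Hu Hv.
  pose proof (Rmin_l d0 (Rmin d1 d2)). pose proof (Rmin_r d0 (Rmin d1 d2)).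
  pose proof (Rmin_l d1 d2). pose proof (Rmin_r d1 d2).
  assert (Hx : Rabs ((f u v - lx * u) - (f x v - lx * x)) <= eps / 2 * Rabs (u - x)).
  { apply (MVT_abs_le (fun z => f z v - lx * z) (fun z => Derive (fun z => f z v) z - lx));
      intros z Hz; pose proof (Rabs_between x u z Hz).
    - apply (is_derive_Rminus (fun z => f z v)); [apply Derive_correct, Hd0; lra|].
      auto_derive; [exact I|ring].
    - left. apply (Hd1 z v); lra. }
  assert (Hv' : Rabs (f x v - f x y - ly * (v - y)) <= eps / 2 * Rabs (v - y)).
  { destruct (Req_dec v y) as [->|Hvy].
    - rewrite !Rminus_diag, !Rmult_0_r, Rminus_0_r, Rabs_R0. lra.
    - assert (Hk : v - y <> 0) by lra.
      specialize (Hd2 (v - y) Hk ltac:(lra)). replace (y + (v - y)) with v in Hd2 by ring.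
      replace (f x v - f x y - ly * (v - y)) with (((f x v - f x y) / (v - y) - ly) * (v - y))
        by (field; exact Hk).
      rewrite Rabs_mult. apply Rmult_le_compat_r; [apply Rabs_pos|lra]. }
  replace (f u v - f x y - (lx * (u - x) + ly * (v - y)))
    with (((f u v - lx * u) - (f x v - lx * x)) + (f x v - f x y - ly * (v - y))) by ring.
  eapply Rle_trans; [apply Rabs_triang|].
  pose proof (Rmax_l (Rabs (u - x)) (Rabs (v - y))). pose proof (Rmax_r (Rabs (u - x)) (Rabs (v - y))).
  pose proof (cond_pos eps). nra.
Qed.

Lemma abs_RInt_le_const_abs (f : R -> R) (u v C : R) :
  (forall y, Rmin u v <= y <= Rmax u v -> continuous f y) ->
  (forall y, Rmin u v <= y <= Rmax u v -> Rabs (f y) <= C) ->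
  Rabs (RInt f u v) <= C * Rabs (v - u).
Proof.
  intros Hc Hb. rewrite Rmult_comm. apply (norm_RInt_le_const_abs f u v _ C Hb).
  apply (RInt_correct (V := R_CompleteNormedModule)), (ex_RInt_continuous (V := R_CompleteNormedModule)), Hc.
Qed.

Lemma RInt_minus_R (f g : R -> R) u v : ex_RInt f u v -> ex_RInt g u v ->
  RInt f u v - RInt g u v = RInt (fun s => f s - g s) u v.
Proof. intros Hf Hg. exact (eq_sym (RInt_minus (V := R_CompleteNormedModule) f g u v Hf Hg)). Qed.

Lemma abs_RInt_minus_const_le (f : R -> R) (u v c eps : R) :
  (forall y, Rmin u v <= y <= Rmax u v -> continuous f y) ->
  (forall y, Rmin u v <= y <= Rmax u v -> Rabs (f y - c) <= eps) ->
  Rabs (RInt f u v - (v - u) * c) <= eps * Rabs (v - u).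
Proof.
  intros Hc Hb.
  replace ((v - u) * c) with (RInt (fun _ => c) u v) by (rewrite RInt_const; reflexivity).
  rewrite RInt_minus_R; [|apply (ex_RInt_continuous (V := R_CompleteNormedModule)), Hc|apply ex_RInt_const].
  apply abs_RInt_le_const_abs; [|exact Hb].
  intros y Hy. apply (continuous_minus (K := R_AbsRing) (V := R_NormedModule)); [now apply Hc|apply continuous_const].
Qed.

Lemma ex_RInt_continuity_pt (h : R -> R) u v : (forall z, continuity_pt h z) -> ex_RInt h u v.
Proof.
  intros Hc. apply (ex_RInt_continuous (V := R_CompleteNormedModule)).
  intros z _. apply continuity_pt_filterlim, Hc.
Qed.

Lemma is_derive_RInt_upper (h : R -> R) (t0 t : R) : (forall z, continuity_pt h z) ->
  is_derive (fun t => RInt h t0 t) t (h t).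
Proof.
  intros Hc. apply (is_derive_RInt (V := R_CompleteNormedModule) h _ t0 t).
  - exists (mkposreal 1 Rlt_0_1). intros b _.
    apply (RInt_correct (V := R_CompleteNormedModule)), ex_RInt_continuity_pt, Hc.
  - apply continuity_pt_filterlim, Hc.
Qed.

Lemma RInt_exp_le (k t : R) : 0 < k -> RInt (fun s => exp (k * s)) 0 t <= exp (k * t) / k.
Proof.
  intros Hk.
  replace (RInt (fun s => exp (k * s)) 0 t) with (exp (k * t) / k - exp (k * 0) / k).
  - rewrite Rmult_0_r, exp_0. pose proof (Rinv_0_lt_compat k Hk). unfold Rdiv. lra.
  - symmetry. apply is_RInt_unique.
    apply (is_RInt_derive (V := R_CompleteNormedModule) (fun s => exp (k * s) / k)).
    + intros x _. auto_derive; [exact I|field; lra].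
    + intros x _. apply continuity_pt_filterlim.
      apply (is_derive_continuity_pt _ _ (k * exp (k * x))). auto_derive; [exact I|ring].
Qed.

Lemma abs_RInt_le_exp (h : R -> R) (A k t : R) : 0 <= t -> 0 < k ->
  (forall z, continuity_pt h z) ->
  (forall s, 0 <= s <= t -> Rabs (h s) <= A * exp (k * s)) ->
  Rabs (RInt h 0 t) <= A * exp (k * t) / k.
Proof.
  intros Ht Hk Hh Hbound.
  assert (Hexp : forall z, continuity_pt (fun s => exp (k * s)) z)
    by (intros z; apply (is_derive_continuity_pt _ _ (k * exp (k * z))); auto_derive; [exact I|ring]).
  assert (HA : 0 <= A) by (pose proof (Hbound 0 ltac:(lra)); pose proof (Rabs_pos (h 0));
    pose proof (exp_pos (k * 0)); nra).
  eapply Rle_trans; [apply abs_RInt_le; [exact Ht|apply ex_RInt_continuity_pt, Hh]|].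
  eapply Rle_trans; [apply (RInt_le _ (fun s => A * exp (k * s))); [exact Ht| | |intros s Hs; apply Hbound; lra]|].
  - apply ex_RInt_continuity_pt. intros z. apply (continuity_pt_comp h Rabs); [apply Hh|apply Rcontinuity_abs].
  - apply ex_RInt_continuity_pt. intros z. apply continuity_pt_mult; [apply continuity_pt_const; intros p q; reflexivity|apply Hexp].
  - rewrite (RInt_scal (V := R_CompleteNormedModule) (fun s => exp (k * s))) by (apply ex_RInt_continuity_pt, Hexp).
    change (scal A (RInt (fun s => exp (k * s)) 0 t)) with (A * RInt (fun s => exp (k * s)) 0 t).
    unfold Rdiv. rewrite Rmult_assoc. apply Rmult_le_compat_l; [exact HA|]. now apply RInt_exp_le.
Qed.

Lemma half_pow_small (C eps : R) : 0 < eps -> exists N, forall n, (n >= N)%nat -> C * (/ 2) ^ n < eps.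
Proof.
  intros Heps.
  assert (HC : 0 < Rabs C + 1) by (pose proof (Rabs_pos C); lra).
  destruct (pow_lt_1_zero (/ 2) ltac:(rewrite Rabs_pos_eq; lra) (eps / (Rabs C + 1)))
    as [N HN]; [now apply Rdiv_lt_0_compat|].
  exists N. intros n Hn. specialize (HN n Hn).
  rewrite Rabs_pos_eq in HN by (apply pow_le; lra).
  apply Rmult_lt_compat_l with (r := Rabs C + 1) in HN; [|exact HC].
  replace ((Rabs C + 1) * (eps / (Rabs C + 1))) with eps in HN by (field; lra).
  pose proof (Rle_abs C). pose proof (pow_le (/ 2) n ltac:(lra)). nra.
Qed.

Lemma le_of_le_half_pow (z w C : R) : (forall n, z <= w + C * (/ 2) ^ n) -> z <= w.
Proof.
  intros H. apply Rnot_lt_le. intros Hlt.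
  destruct (half_pow_small C (z - w)) as [N HN]; [lra|].
  specialize (HN N (le_n N)). specialize (H N). lra.
Qed.

Lemma half_pow_S_le n : (/ 2) ^ S n <= (/ 2) ^ n.
Proof. simpl. pose proof (pow_le (/ 2) n ltac:(lra)). lra. Qed.

Lemma eq_of_vanishing_drift (u v C : R) :
  (forall eta, 0 < eta -> exists q0 qt, Rabs (q0 - v) <= eta /\ Rabs (qt - u) <= eta /\
     Rabs (qt - q0) <= Rabs q0 * (exp (eta * C) - 1)) -> u = v.
Proof.
  intros H. apply eq_of_Rabs_le_0, Rnot_lt_le. intros Hz. set (z := Rabs (u - v)) in *.
  set (kap := z / (4 * (Rabs v + 1))).
  assert (Hkap : 0 < kap) by (unfold kap; pose proof (Rabs_pos v); apply Rdiv_lt_0_compat; lra).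
  assert (Hexp : continuity_pt (fun e => exp (e * C)) 0)
    by (apply (is_derive_continuity_pt _ _ (C * exp (0 * C))); auto_derive; [exact I|ring]).
  destruct (proj1 (continuity_pt_cont_in _ _) Hexp kap Hkap) as [d [Hd Hfd]].
  set (eta := Rmin (Rmin 1 (z / 8)) (d / 2)).
  assert (Heta : 0 < eta) by (unfold eta; repeat apply Rmin_pos; lra).
  assert (Heta1 : eta <= 1) by (unfold eta; eapply Rle_trans; apply Rmin_l).
  assert (Heta2 : eta <= z / 8) by (unfold eta; eapply Rle_trans; [apply Rmin_l|apply Rmin_r]).
  assert (Heta3 : eta <= d / 2) by (unfold eta; apply Rmin_r).
  destruct (H eta Heta) as [q0 [qt [H0 [Ht Hdrift]]]].
  assert (Hsmall : exp (eta * C) - 1 < kap).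
  { specialize (Hfd eta I ltac:(rewrite Rminus_0_r, Rabs_pos_eq; lra)).
    rewrite Rmult_0_l, exp_0 in Hfd. apply Rabs_def2 in Hfd. lra. }
  assert (Hq0 : Rabs q0 <= Rabs v + 1).
  { replace q0 with ((q0 - v) + v) by ring. pose proof (Rabs_triang (q0 - v) v). lra. }
  assert (Hquarter : (Rabs v + 1) * kap = z / 4) by (unfold kap; field; pose proof (Rabs_pos v); lra).
  assert (Rabs (qt - q0) <= z / 4).
  { eapply Rle_trans; [exact Hdrift|]. destruct (Rle_or_lt (exp (eta * C) - 1) 0).
    - pose proof (Rabs_pos q0). assert (Rabs q0 * (exp (eta * C) - 1) <= 0) by nra. lra.
    - rewrite <- Hquarter. apply Rmult_le_compat; [apply Rabs_pos|lra|exact Hq0|lra]. }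
  assert (Htri : z <= Rabs (u - qt) + Rabs (qt - q0) + Rabs (q0 - v)).
  { unfold z. replace (u - v) with ((u - qt) + (qt - q0) + (q0 - v)) by ring.
    eapply Rle_trans; [apply Rabs_triang|]. pose proof (Rabs_triang (u - qt) (qt - q0)). lra. }
  rewrite Rabs_minus_sym in Htri. lra.
Qed.

(* Approach x from inside along z = (1 - th) x. *)
Lemma continuous_le_on_closure (f : R -> R) (r c x : R) :
  0 < r -> continuity_pt f x -> - r <= x <= r ->
  (forall z, - r < z < r -> f z <= c) -> f x <= c.
Proof.
  intros Hr Hc Hx Hz. apply Rnot_lt_le. intros Hlt.
  destruct (proj1 (continuity_pt_cont_in f x) Hc (f x - c)) as [d [Hd Hfd]]; [lra|].
  set (th := Rmin (d / (2 * r)) (1 / 2)).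
  assert (Hth : 0 < th <= 1 / 2) by (split; [apply Rmin_pos; [apply Rdiv_lt_0_compat|]; lra|apply Rmin_r]).
  assert (Hthd : th * r < d).
  { apply Rle_lt_trans with (d / (2 * r) * r); [apply Rmult_le_compat_r; [lra|apply Rmin_l]|].
    replace (d / (2 * r) * r) with (d / 2) by (field; lra). lra. }
  assert (Hzx : Rabs ((1 - th) * x - x) < d).
  { replace ((1 - th) * x - x) with (- (th * x)) by ring.
    rewrite Rabs_Ropp, Rabs_mult, (Rabs_pos_eq th) by lra.
    assert (Rabs x <= r) by (apply Rabs_le; lra). nra. }
  specialize (Hfd _ I Hzx). specialize (Hz ((1 - th) * x) ltac:(split; nra)).
  apply Rabs_def2 in Hfd. lra.
Qed.

Definition clamp (lo hi x : R) : R := Rmax lo (Rmin hi x).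

Lemma clamp_in lo hi x : lo <= hi -> lo <= clamp lo hi x <= hi.
Proof. intros H. unfold clamp, Rmax, Rmin. repeat destruct Rle_dec; lra. Qed.

Lemma clamp_id lo hi x : lo <= x <= hi -> clamp lo hi x = x.
Proof. intros H. unfold clamp, Rmax, Rmin. repeat destruct Rle_dec; lra. Qed.

Lemma clamp_lip lo hi x y : lo <= hi -> Rabs (clamp lo hi x - clamp lo hi y) <= Rabs (x - y).
Proof.
  intros H. pose proof (Rle_abs (x - y)). pose proof (Rabs_maj2 (x - y)).
  apply Rabs_le. unfold clamp, Rmax, Rmin. repeat destruct Rle_dec; lra.
Qed.

Lemma between_in_interval (l h u v z : R) : l <= u <= h -> l <= v <= h ->
  Rmin u v <= z <= Rmax u v -> l <= z <= h.
Proof. intros Hu Hv Hz. unfold Rmin, Rmax in Hz. destruct (Rle_dec u v); lra. Qed.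

Lemma telescope_le (u : nat -> R) (N : nat) :
  (forall k, (k < N)%nat -> Rabs (u (S k) - u k) <= 1) -> Rabs (u N - u O) <= INR N.
Proof.
  induction N as [|N IH]; intros Hstep.
  - rewrite Rminus_diag, Rabs_R0. apply Rle_refl.
  - rewrite S_INR. replace (u (S N) - u O) with ((u (S N) - u N) + (u N - u O)) by ring.
    eapply Rle_trans; [apply Rabs_triang|].
    pose proof (Hstep N (Nat.lt_succ_diag_r N)). assert (Rabs (u N - u O) <= INR N) by auto. lra.
Qed.

(** * Characteristics *)

Section Solution.

Variables (T : R) (a : R -> R -> R).
Hypothesis HC : C2_on_rect T a.

Lemma a_C1 t x : in_rect T t x ->
  ex_derive (fun y => a t y) x /\ ex_derive (fun s => a s x) t /\
  cont2 a t x /\ cont2 (dX a) t x /\ cont2 (dT a) t x.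
Proof. apply (proj1 HC). Qed.

Lemma a_continuity_2d t x : in_rect T t x -> continuity_2d_pt a t x.
Proof. intros H. apply continuity_2d_pt_filterlim, (a_C1 t x H). Qed.

Lemma a_continuous_x t x : in_rect T t x -> continuous (fun y => a t y) x.
Proof. intros H. apply (ex_derive_continuous (K := R_AbsRing) (V := R_NormedModule)), (a_C1 t x H). Qed.

Lemma a_unif_cont eps : 0 < eps -> exists d, 0 < d /\ forall t x s y,
  in_rect T t x -> in_rect T s y -> Rabs (s - t) < d -> Rabs (y - x) < d ->
  Rabs (a s y - a t x) < eps.
Proof.
  intros Heps.
  destruct (uniform_continuity_2d a 0 T (- PI) PI) with (eps := mkposreal eps Heps) as [d Hd].
  { intros t x Ht Hx. now apply a_continuity_2d. }
  exists d. split; [apply cond_pos|]. intros t x s y [] []. now apply Hd.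
Qed.

(* Walk from (0, -PI) to (t, x) in N steps shorter than the modulus of
   uniform continuity for [eps = 1]. *)
Lemma a_bounded : exists M, 0 <= M /\ forall t x, in_rect T t x -> Rabs (a t x) <= M.
Proof.
  destruct (a_unif_cont 1 Rlt_0_1) as [d [Hd Hunif]]. pose proof PI_RGT_0.
  destruct (INR_unbounded (Rabs ((T + 2 * PI) / d))) as [N HN].
  pose proof (Rle_abs ((T + 2 * PI) / d)). pose proof (Rabs_pos ((T + 2 * PI) / d)).
  assert (HdN : T + 2 * PI < d * INR N).
  { assert (Hq : (T + 2 * PI) / d < INR N) by lra.
    apply Rmult_lt_compat_l with (r := d) in Hq; [|exact Hd].
    now replace (d * ((T + 2 * PI) / d)) with (T + 2 * PI) in Hq by (field; lra). }
  assert (Hsmall : forall z, 0 <= z <= T + 2 * PI -> Rabs (z / INR N) < d).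
  { intros z Hz. rewrite Rabs_pos_eq by (apply Rle_mult_inv_pos; lra).
    apply Rmult_lt_reg_r with (INR N); [lra|].
    unfold Rdiv. rewrite Rmult_assoc, Rinv_l by lra. lra. }
  exists (Rabs (a 0 (- PI)) + INR N). split; [pose proof (Rabs_pos (a 0 (- PI))); lra|].
  intros t x [Ht Hx].
  set (u := fun k => a (INR k / INR N * t) (- PI + INR k / INR N * (x + PI))).
  assert (Hin : forall k, (k <= N)%nat ->
    in_rect T (INR k / INR N * t) (- PI + INR k / INR N * (x + PI))).
  { intros k Hk. apply le_INR in Hk. pose proof (pos_INR k).
    assert (0 <= INR k / INR N <= 1).
    { split; [apply Rle_mult_inv_pos; lra|].
      apply Rmult_le_reg_r with (INR N); [lra|]. unfold Rdiv. rewrite Rmult_assoc, Rinv_l; lra. }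
    split; split; nra. }
  assert (Hstep : forall k, (k < N)%nat -> Rabs (u (S k) - u k) <= 1).
  { intros k Hk. left. unfold u. rewrite S_INR.
    apply Hunif; [apply Hin; lia|rewrite <- S_INR; apply Hin; lia| |].
    - replace ((INR k + 1) / INR N * t - INR k / INR N * t) with (t / INR N) by (field; lra).
      apply Hsmall. lra.
    - replace (- PI + (INR k + 1) / INR N * (x + PI) - (- PI + INR k / INR N * (x + PI)))
        with ((x + PI) / INR N) by (field; lra).
      apply Hsmall. lra. }
  assert (Hu := telescope_le u N Hstep). unfold u in Hu.
  replace (INR N / INR N * t) with t in Hu by (field; lra).
  replace (- PI + INR N / INR N * (x + PI)) with x in Hu by (field; lra).
  replace (INR 0 / INR N * t) with 0 in Hu by (simpl; field; lra).
  replace (- PI + INR 0 / INR N * (x + PI)) with (- PI) in Hu by (simpl; field; lra).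
  pose proof (Rabs_triang_inv (a t x) (a 0 (- PI))). lra.
Qed.

Lemma taylor_at_critical t c : 0 <= t <= T -> - PI < c < PI -> dX a t c = 0 ->
  forall eps, 0 < eps -> exists del, 0 < del /\ forall h, h <> 0 -> Rabs h < del ->
    Rabs ((a t (c + h) - a t c) / (h * h) - dX (dX a) t c / 2) <= eps.
Proof.
  intros Ht Hc Hcrit.
  apply (taylor_quotient (fun z => a t z) c (Rmin (c + PI) (PI - c))); [apply Rmin_pos; lra| | |exact Hcrit].
  - intros z Hz. apply Rabs_def2 in Hz. pose proof (Rmin_l (c + PI) (PI - c)). pose proof (Rmin_r (c + PI) (PI - c)).
    apply (a_C1 t z). split; [exact Ht|lra].
  - apply (proj1 (proj2 HC) t c). split; [exact Ht|lra].
Qed.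

Hypothesis HS : solves_eq T a.
Variable M : R.
Hypothesis M_ge0 : 0 <= M.
Hypothesis a_le_M : forall t x, in_rect T t x -> Rabs (a t x) <= M.

Definition velocity (t x : R) : R := RInt (fun y => a t y) (- PI) x.

Lemma ex_RInt_a t u v : 0 <= t <= T -> - PI <= u <= PI -> - PI <= v <= PI ->
  ex_RInt (fun y => a t y) u v.
Proof.
  intros Ht Hu Hv. apply (ex_RInt_continuous (V := R_CompleteNormedModule)).
  intros z Hz. apply a_continuous_x. split; [exact Ht|exact (between_in_interval _ _ _ _ _ Hu Hv Hz)].
Qed.

Lemma velocity_diff t u v : 0 <= t <= T -> - PI <= u <= PI -> - PI <= v <= PI ->
  velocity t v - velocity t u = RInt (fun y => a t y) u v.
Proof.
  intros Ht Hu Hv. pose proof PI_RGT_0. unfold velocity.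
  rewrite <- (RInt_Chasles (V := R_CompleteNormedModule) (fun y => a t y) (- PI) u v);
    [change plus with Rplus; ring|apply ex_RInt_a; lra|now apply ex_RInt_a].
Qed.

Lemma velocity_lip t u v : 0 <= t <= T -> - PI <= u <= PI -> - PI <= v <= PI ->
  Rabs (velocity t v - velocity t u) <= M * Rabs (v - u).
Proof.
  intros Ht Hu Hv. rewrite velocity_diff by assumption.
  apply abs_RInt_le_const_abs; intros y Hy; pose proof (between_in_interval _ _ _ _ _ Hu Hv Hy).
  - now apply a_continuous_x.
  - now apply a_le_M.
Qed.

Lemma velocity_left t : velocity t (- PI) = 0.
Proof. exact (RInt_point (V := R_CompleteNormedModule) _ _). Qed.

Lemma velocity_right t : 0 <= t <= T -> velocity t PI = 0.
Proof. apply (proj2 HS). Qed.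

Lemma characteristic_cont X y : characteristic T a y X ->
  forall t, 0 <= t <= T -> cont_in (in_0T T) X t.
Proof. intros [_ [HX _]] t Ht. now apply cont_in_filterlim, HX. Qed.

Lemma characteristic_range X y : characteristic T a y X ->
  forall t, 0 <= t <= T -> - PI <= X t <= PI.
Proof. intros [_ [_ [HX _]]]. exact HX. Qed.

Lemma characteristic_const z : (forall t, 0 < t < T -> velocity t z = 0) ->
  - PI <= z <= PI -> characteristic T a z (fun _ => z).
Proof.
  intros Hz Hrange. split; [reflexivity|split; [|split]].
  - intros t Ht. apply filterlim_const.
  - intros _ _. exact Hrange.
  - intros t Ht. change (is_derive (fun _ => z) t (velocity t z)). rewrite Hz by exact Ht.
    apply (is_derive_const (K := R_AbsRing) (V := R_NormedModule)).
Qed.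

Section TwoCharacteristics.

Variables (X1 X2 : R -> R) (y1 y2 : R).
Hypothesis X1_char : characteristic T a y1 X1.
Hypothesis X2_char : characteristic T a y2 X2.

Let velocity_lip_along s : 0 < s < T ->
  Rabs (velocity s (X1 s) - velocity s (X2 s)) <= M * Rabs (X1 s - X2 s).
Proof.
  intros Hs. apply velocity_lip; [lra|apply (characteristic_range X2 y2)|apply (characteristic_range X1 y1)];
    (assumption || lra).
Qed.

Let X1_cont := characteristic_cont _ _ X1_char.
Let X2_cont := characteristic_cont _ _ X2_char.
Let X1_deriv := proj2 (proj2 (proj2 X1_char)).
Let X2_deriv := proj2 (proj2 (proj2 X2_char)).

Lemma characteristic_gap_le t : 0 <= t <= T ->
  Rabs (X1 t - X2 t) <= Rabs (y1 - y2) * exp (M * t).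
Proof.
  rewrite <- (proj1 X1_char), <- (proj1 X2_char).
  exact (ode_gap_le T M velocity X1 X2 M_ge0 velocity_lip_along X1_cont X2_cont X1_deriv X2_deriv t).
Qed.

Lemma characteristic_gap_ge t : 0 <= t <= T ->
  Rabs (y1 - y2) * exp (- (M * t)) <= Rabs (X1 t - X2 t).
Proof.
  rewrite <- (proj1 X1_char), <- (proj1 X2_char).
  exact (ode_gap_ge T M velocity X1 X2 M_ge0 velocity_lip_along X1_cont X2_cont X1_deriv X2_deriv t).
Qed.

Lemma characteristic_ne t : 0 <= t <= T -> y1 <> y2 -> X1 t <> X2 t.
Proof.
  intros Ht Hy Heq. pose proof (characteristic_gap_ge t Ht) as Hge.
  rewrite Heq, Rminus_diag, Rabs_R0 in Hge.
  assert (0 < Rabs (y1 - y2) * exp (- (M * t))) by (apply Rmult_lt_0_compat; [apply Rabs_pos_lt; lra|apply exp_pos]).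
  lra.
Qed.

End TwoCharacteristics.

Lemma characteristic_left X : characteristic T a (- PI) X -> forall t, 0 <= t <= T -> X t = - PI.
Proof.
  intros HX t Ht. pose proof PI_RGT_0.
  assert (Hc := characteristic_const (- PI) (fun s _ => velocity_left s) ltac:(lra)).
  pose proof (characteristic_gap_le _ _ _ _ HX Hc t Ht) as Hle.
  rewrite Rminus_diag, Rabs_R0, Rmult_0_l in Hle. now apply eq_of_Rabs_le_0.
Qed.

Lemma characteristic_right X : characteristic T a PI X -> forall t, 0 <= t <= T -> X t = PI.
Proof.
  intros HX t Ht. pose proof PI_RGT_0.
  assert (Hc := characteristic_const PI (fun s Hs => velocity_right s ltac:(lra)) ltac:(lra)).
  pose proof (characteristic_gap_le _ _ _ _ HX Hc t Ht) as Hle.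
  rewrite Rminus_diag, Rabs_R0, Rmult_0_l in Hle. now apply eq_of_Rabs_le_0.
Qed.

Lemma characteristic_interior X y : characteristic T a y X -> - PI < y < PI ->
  forall t, 0 <= t <= T -> - PI < X t < PI.
Proof.
  intros HX Hy t Ht. pose proof PI_RGT_0. pose proof (characteristic_range X y HX t Ht).
  assert (Hl := characteristic_const (- PI) (fun s _ => velocity_left s) ltac:(lra)).
  assert (Hr := characteristic_const PI (fun s Hs => velocity_right s ltac:(lra)) ltac:(lra)).
  pose proof (characteristic_ne _ _ _ _ HX Hl t Ht ltac:(lra)).
  pose proof (characteristic_ne _ _ _ _ HX Hr t Ht ltac:(lra)).
  lra.
Qed.

Lemma in_rect_locally_2d s x : 0 < s < T -> - PI < x < PI -> locally_2d (in_rect T) s x.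
Proof.
  intros Hs Hx. set (del := Rmin (Rmin s (T - s)) (Rmin (x + PI) (PI - x))).
  assert (Hdel : 0 < del) by (unfold del; repeat apply Rmin_pos; lra).
  exists (mkposreal del Hdel). simpl. intros u v Hu Hv.
  unfold del in Hu, Hv. apply Rabs_def2 in Hu. apply Rabs_def2 in Hv.
  pose proof (Rmin_l (Rmin s (T - s)) (Rmin (x + PI) (PI - x))).
  pose proof (Rmin_r (Rmin s (T - s)) (Rmin (x + PI) (PI - x))).
  pose proof (Rmin_l s (T - s)). pose proof (Rmin_r s (T - s)).
  pose proof (Rmin_l (x + PI) (PI - x)). pose proof (Rmin_r (x + PI) (PI - x)).
  split; split; lra.
Qed.

Lemma riccati_along_characteristic X y s : characteristic T a y X -> - PI < y < PI -> 0 < s < T ->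
  is_derive (fun s => a s (X s)) s (a s (X s) ^ 2 - / PI * RInt (fun z => a s z ^ 2) (- PI) PI).
Proof.
  intros HX Hy Hs.
  pose proof (characteristic_interior X y HX Hy s ltac:(lra)) as Hx.
  set (x := X s) in *.
  assert (Hr : in_rect T s x) by (split; lra).
  destruct (a_C1 s x Hr) as [Hdx [_ [_ [_ Hdt]]]].
  assert (Hdiff : differentiable_pt_lim a s x (dT a s x) (dX a s x)).
  { apply differentiable_pt_lim_of_partials; [|now apply continuity_2d_pt_filterlim|exact Hdx].
    destruct (in_rect_locally_2d s x Hs Hx) as [d Hd].
    exists d. intros u v Hu Hv. apply (a_C1 u v), Hd; assumption. }
  apply (is_derive_eq _ _ (dT a s x * 1 + dX a s x * velocity s x)).
  - apply is_derive_Reals, (derivable_pt_lim_comp_2d a (fun t => t) X);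
      [exact Hdiff|apply derivable_pt_lim_id|apply is_derive_Reals, (proj2 (proj2 (proj2 HX))), Hs].
  - destruct HS as [Hpde _]. specialize (Hpde s x Hr). unfold velocity.
    rewrite Rmult_1_r, (Rmult_comm (dX a s x)). lra.
Qed.

Lemma cont_in_along_characteristic X y t : characteristic T a y X -> 0 <= t <= T ->
  cont_in (in_0T T) (fun s => a s (X s)) t.
Proof.
  intros HX Ht. apply (cont_in_comp_2d _ (fun s => s) X a t).
  - apply cont_in_continuity_pt, continuity_pt_id.
  - exact (characteristic_cont X y HX t Ht).
  - apply a_continuity_2d. split; [exact Ht|exact (characteristic_range X y HX t Ht)].
Qed.

(* The nonlocal term cancels in the difference of two Riccati equations. *)
Lemma characteristic_order X Y yX yY : characteristic T a yX X -> characteristic T a yY Y ->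
  - PI < yX < PI -> - PI < yY < PI -> a 0 yX <= a 0 yY ->
  forall t, 0 <= t <= T -> a t (X t) <= a t (Y t).
Proof.
  intros HX HY HyX HyY H0 t Ht.
  enough (a t (X t) - a t (Y t) <= 0) by lra.
  apply (linear_ode_nonpos T (2 * M) (fun s => a s (X s) - a s (Y s))
           (fun s => a s (X s) + a s (Y s))); [| | |exact Ht|].
  - intros u Hu. apply cont_in_minus; eapply cont_in_along_characteristic; eassumption.
  - intros s Hs. eapply is_derive_eq.
    + apply is_derive_Rminus; eapply riccati_along_characteristic; eassumption.
    + ring.
  - intros s Hs. eapply Rle_trans; [apply Rabs_triang|].
    assert (Rabs (a s (X s)) <= M) by (apply a_le_M; split; [lra|apply (characteristic_range X yX HX); lra]).
    assert (Rabs (a s (Y s)) <= M) by (apply a_le_M; split; [lra|apply (characteristic_range Y yY HY); lra]).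
    lra.
  - rewrite (proj1 HX), (proj1 HY). lra.
Qed.

Hypothesis T_pos : 0 < T.

(** * Existence of characteristics *)

(* Clamping makes the Picard iterates defined and continuous on the whole line. *)
Definition velocity_ext (s x : R) : R := velocity (clamp 0 T s) (clamp (- PI) PI x).

Let clamp_t s : 0 <= clamp 0 T s <= T.
Proof. apply clamp_in. lra. Qed.

Let clamp_x x : - PI <= clamp (- PI) PI x <= PI.
Proof. apply clamp_in. pose proof PI_RGT_0. lra. Qed.

Lemma velocity_ext_lip s x y : Rabs (velocity_ext s x - velocity_ext s y) <= M * Rabs (x - y).
Proof.
  eapply Rle_trans; [apply velocity_lip; apply clamp_t || apply clamp_x|].
  apply Rmult_le_compat_l; [exact M_ge0|]. apply clamp_lip. pose proof PI_RGT_0. lra.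
Qed.

Lemma velocity_ext_left s : velocity_ext s (- PI) = 0.
Proof. unfold velocity_ext. rewrite (clamp_id (- PI)) by (pose proof PI_RGT_0; lra). apply velocity_left. Qed.

Lemma velocity_ext_right s : velocity_ext s PI = 0.
Proof.
  unfold velocity_ext. rewrite (clamp_id (- PI)) by (pose proof PI_RGT_0; lra).
  apply velocity_right, clamp_t.
Qed.

Let B : R := 2 * PI * M.

Let B_ge0 : 0 <= B.
Proof. unfold B. pose proof PI_RGT_0. nra. Qed.

Lemma velocity_ext_bound s x : Rabs (velocity_ext s x) <= B.
Proof.
  rewrite <- (Rminus_0_r (velocity_ext s x)), <- (velocity_ext_left s).
  unfold velocity_ext at 2. rewrite (clamp_id (- PI) PI (- PI)) by (pose proof PI_RGT_0; lra).
  eapply Rle_trans; [apply velocity_lip; [apply clamp_t|pose proof PI_RGT_0; lra|apply clamp_x]|].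
  pose proof (clamp_x x). unfold B. rewrite Rmult_comm. apply Rmult_le_compat_r; [exact M_ge0|].
  apply Rabs_le. lra.
Qed.

Lemma velocity_time_cont eps : 0 < eps -> exists d, 0 < d /\ forall t t' z,
  0 <= t <= T -> 0 <= t' <= T -> - PI <= z <= PI -> Rabs (t' - t) < d ->
  Rabs (velocity t' z - velocity t z) <= eps.
Proof.
  intros Heps. pose proof PI_RGT_0.
  destruct (a_unif_cont (eps / (2 * PI))) as [d [Hd Hunif]]; [apply Rdiv_lt_0_compat; lra|].
  exists d. split; [exact Hd|]. intros t t' z Ht Ht' Hz Htt.
  unfold velocity. rewrite RInt_minus_R by (apply ex_RInt_a; lra).
  eapply Rle_trans; [apply abs_RInt_le_const_abs with (C := eps / (2 * PI));
    intros y Hy; pose proof (between_in_interval (- PI) PI (- PI) z y ltac:(lra) Hz Hy)|].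
  - apply (continuous_minus (K := R_AbsRing) (V := R_NormedModule) (fun y => a t' y) (fun y => a t y));
      apply a_continuous_x; split; assumption.
  - left. apply Hunif; [split; assumption|split; assumption|exact Htt|].
    rewrite Rminus_diag, Rabs_R0. exact Hd.
  - rewrite Rabs_pos_eq by lra.
    apply Rle_trans with (eps / (2 * PI) * (2 * PI)); [apply Rmult_le_compat_l; [apply Rlt_le, Rdiv_lt_0_compat|]; lra|].
    right. field. lra.
Qed.

Lemma velocity_ext_cont s x : continuity_2d_pt velocity_ext s x.
Proof.
  intros [eps Heps]. simpl.
  destruct (velocity_time_cont (eps / 2)) as [d1 [Hd1 Htime]]; [lra|].
  set (d2 := eps / (2 * (M + 1))).
  assert (Hd2 : 0 < d2) by (unfold d2; apply Rdiv_lt_0_compat; lra).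
  exists (mkposreal _ (Rmin_pos _ _ Hd1 Hd2)). simpl. intros u v Hu Hv.
  assert (Hspace : Rabs (velocity_ext u v - velocity_ext u x) < eps / 2).
  { eapply Rle_lt_trans; [apply velocity_ext_lip|].
    apply Rle_lt_trans with (M * d2).
    - apply Rmult_le_compat_l; [exact M_ge0|]. pose proof (Rmin_r d1 d2). lra.
    - unfold d2. apply Rmult_lt_reg_r with (2 * (M + 1)); [lra|].
      replace (M * (eps / (2 * (M + 1))) * (2 * (M + 1))) with (M * eps) by (field; lra). nra. }
  assert (Htime' : Rabs (velocity_ext u x - velocity_ext s x) <= eps / 2).
  { apply Htime; [apply clamp_t|apply clamp_t|apply clamp_x|].
    eapply Rle_lt_trans; [apply clamp_lip; lra|]. pose proof (Rmin_l d1 d2). lra. }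
  replace (velocity_ext u v - velocity_ext s x)
    with ((velocity_ext u v - velocity_ext u x) + (velocity_ext u x - velocity_ext s x)) by ring.
  eapply Rle_lt_trans; [apply Rabs_triang|]. lra.
Qed.

Lemma velocity_ext_comp_cont (X : R -> R) : (forall t, continuity_pt X t) ->
  forall z, continuity_pt (fun s => velocity_ext s (X s)) z.
Proof.
  intros HX z. apply (continuity_pt_comp_2d (fun s => s) X velocity_ext);
    [apply continuity_pt_id|apply HX|apply velocity_ext_cont].
Qed.

Fixpoint picard (y : R) (n : nat) : R -> R :=
  match n with
  | O => fun _ => y
  | S n => fun t => y + RInt (fun s => velocity_ext s (picard y n s)) 0 t
  end.

Lemma picard_S y n t : picard y (S n) t = y + RInt (fun s => velocity_ext s (picard y n s)) 0 t.
Proof. reflexivity. Qed.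

Lemma picard_cont y n t : continuity_pt (picard y n) t.
Proof.
  revert t. induction n as [|n IH]; intros t.
  - apply continuity_pt_const. intros u v. reflexivity.
  - apply (is_derive_continuity_pt _ _ (velocity_ext t (picard y n t))).
    apply is_derive_const_plus, (is_derive_RInt_upper (fun s => velocity_ext s (picard y n s))).
    apply velocity_ext_comp_cont, IH.
Qed.

Let L : R := M + 1.
Let K : R := B * T * exp (2 * L * T).

Let K_ge0 : 0 <= K.
Proof. unfold K. pose proof (exp_pos (2 * L * T)). pose proof B_ge0. apply Rmult_le_pos; nra. Qed.

Lemma picard_step y n t : 0 <= t <= T ->
  Rabs (picard y (S n) t - picard y n t) <= B * T * (/ 2) ^ n * exp (2 * L * t).
Proof.
  revert t. induction n as [|n IH]; intros t Ht.
  - rewrite picard_S, Rplus_minus_l.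
    eapply Rle_trans; [apply abs_RInt_le_const_abs with (C := B)|].
    + intros z _. apply continuity_pt_filterlim, (velocity_ext_comp_cont (fun _ => y)).
      intros u. apply continuity_pt_const. intros p q. reflexivity.
    + intros z _. apply velocity_ext_bound.
    + rewrite Rminus_0_r, Rabs_pos_eq, pow_O, Rmult_1_r by lra.
      assert (1 <= exp (2 * L * t)) by (rewrite <- exp_0; apply exp_le_compat; unfold L; nra).
      assert (B * t <= B * T) by (apply Rmult_le_compat_l; [exact B_ge0|lra]).
      assert (0 <= B * T) by (pose proof B_ge0; nra). nra.
  - set (C := B * T * (/ 2) ^ n).
    assert (C_ge0 : 0 <= C)
      by (unfold C; pose proof B_ge0; pose proof (pow_le (/ 2) n ltac:(lra)); apply Rmult_le_pos; nra).
    rewrite (picard_S y (S n) t), (picard_S y n t), Rminus_plus_l_l, RInt_minus_R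
      by (apply ex_RInt_continuity_pt, velocity_ext_comp_cont, picard_cont).
    eapply Rle_trans; [apply (abs_RInt_le_exp _ (M * C) (2 * L)); [lra|unfold L; lra| |]|].
    + intros z. apply continuity_pt_minus; apply velocity_ext_comp_cont, picard_cont.
    + intros s Hs. eapply Rle_trans; [apply velocity_ext_lip|].
      rewrite Rmult_assoc. apply Rmult_le_compat_l; [exact M_ge0|]. apply IH. lra.
    + replace (B * T * (/ 2) ^ S n) with (C / 2) by (unfold C; simpl; field).
      pose proof (exp_pos (2 * L * t)).
      replace (M * C * exp (2 * L * t) / (2 * L)) with (C / 2 * exp (2 * L * t) * (M / L))
        by (unfold L; field; lra).
      rewrite <- (Rmult_1_r (C / 2 * exp (2 * L * t))) at 2.
      apply Rmult_le_compat_l; [nra|]. unfold L. apply Rmult_le_reg_r with (M + 1); [lra|].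
      unfold Rdiv. rewrite Rmult_assoc, Rinv_l by lra. lra.
Qed.

Lemma picard_cauchy y n m t : (n <= m)%nat -> 0 <= t <= T ->
  Rabs (picard y m t - picard y n t) <= 2 * K * (/ 2) ^ n.
Proof.
  intros Hnm Ht.
  assert (Hstep : forall k, Rabs (picard y (S k) t - picard y k t) <= K * (/ 2) ^ k).
  { intros k. eapply Rle_trans; [exact (picard_step y k t Ht)|]. unfold K.
    replace (B * T * exp (2 * L * T) * (/ 2) ^ k) with (B * T * (/ 2) ^ k * exp (2 * L * T)) by ring.
    apply Rmult_le_compat_l; [pose proof B_ge0; pose proof (pow_le (/ 2) k ltac:(lra)); apply Rmult_le_pos; nra|].
    apply exp_le_compat. unfold L. nra. }
  enough (Hsum : forall k, Rabs (picard y (n + k) t - picard y n t) <= 2 * K * ((/ 2) ^ n - (/ 2) ^ (n + k))).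
  { replace m with (n + (m - n))%nat by lia. eapply Rle_trans; [apply Hsum|].
    pose proof (pow_le (/ 2) (n + (m - n)) ltac:(lra)). nra. }
  induction k as [|k IH].
  - rewrite Nat.add_0_r, !Rminus_diag, Rabs_R0. lra.
  - rewrite Nat.add_succ_r.
    replace (picard y (S (n + k)) t - picard y n t) with
      ((picard y (S (n + k)) t - picard y (n + k) t) + (picard y (n + k) t - picard y n t)) by ring.
    eapply Rle_trans; [apply Rabs_triang|]. pose proof (Hstep (n + k)%nat). simpl pow at 2. lra.
Qed.

Definition flow (y t : R) : R := real (Lim_seq (fun n => picard y n (clamp 0 T t))).

Lemma flow_lim y t : is_lim_seq (fun n => picard y n (clamp 0 T t)) (flow y t).
Proof.
  apply Lim_seq_correct', ex_lim_seq_cauchy_corr. intros eps.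
  destruct (half_pow_small (4 * K) eps (cond_pos eps)) as [N HN].
  exists N. intros n m Hn Hm.
  pose proof (picard_cauchy y N n (clamp 0 T t) Hn (clamp_t t)).
  pose proof (picard_cauchy y N m (clamp 0 T t) Hm (clamp_t t)).
  specialize (HN N (le_n N)).
  replace (picard y n (clamp 0 T t) - picard y m (clamp 0 T t)) with
    ((picard y n (clamp 0 T t) - picard y N (clamp 0 T t))
     - (picard y m (clamp 0 T t) - picard y N (clamp 0 T t))) by ring.
  eapply Rle_lt_trans; [apply Rabs_triang|]. rewrite Rabs_Ropp. lra.
Qed.

Lemma flow_picard y n t : Rabs (flow y t - picard y n (clamp 0 T t)) <= 2 * K * (/ 2) ^ n.
Proof.
  assert (Hle := is_lim_seq_le
    (fun k => Rabs (picard y (k + n) (clamp 0 T t) - picard y n (clamp 0 T t)))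
    (fun _ => 2 * K * (/ 2) ^ n) (Rabs (flow y t - picard y n (clamp 0 T t))) (2 * K * (/ 2) ^ n)).
  simpl in Hle. apply Hle.
  - intros k. apply picard_cauchy; [lia|apply clamp_t].
  - apply (is_lim_seq_abs _ (Finite (flow y t - picard y n (clamp 0 T t)))).
    apply (is_lim_seq_minus' _ (fun _ => picard y n (clamp 0 T t))); [|apply is_lim_seq_const].
    apply (is_lim_seq_incr_n (fun k => picard y k (clamp 0 T t)) n), flow_lim.
  - apply is_lim_seq_const.
Qed.

Lemma picard_lip y n u v : Rabs (picard y (S n) u - picard y (S n) v) <= B * Rabs (u - v).
Proof.
  rewrite !picard_S, Rminus_plus_l_l.
  rewrite <- (RInt_Chasles (V := R_CompleteNormedModule) _ 0 v u)
    by (apply ex_RInt_continuity_pt, velocity_ext_comp_cont, picard_cont).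
  change (plus ?p ?q) with (p + q). rewrite Rplus_minus_l.
  apply abs_RInt_le_const_abs; intros z _;
    [apply continuity_pt_filterlim, velocity_ext_comp_cont, picard_cont|apply velocity_ext_bound].
Qed.

Lemma flow_lip y t t' : Rabs (flow y t - flow y t') <= B * Rabs (t - t').
Proof.
  apply (le_of_le_half_pow _ _ (4 * K)). intros n.
  pose proof (flow_picard y (S n) t). pose proof (flow_picard y (S n) t').
  pose proof (picard_lip y n (clamp 0 T t) (clamp 0 T t')).
  assert (B * Rabs (clamp 0 T t - clamp 0 T t') <= B * Rabs (t - t'))
    by (apply Rmult_le_compat_l; [exact B_ge0|apply clamp_lip; lra]).
  assert (2 * K * (/ 2) ^ S n <= 2 * K * (/ 2) ^ n) by (apply Rmult_le_compat_l; [lra|apply half_pow_S_le]).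
  replace (flow y t - flow y t') with ((flow y t - picard y (S n) (clamp 0 T t))
     - (flow y t' - picard y (S n) (clamp 0 T t'))
     + (picard y (S n) (clamp 0 T t) - picard y (S n) (clamp 0 T t'))) by ring.
  eapply Rle_trans; [apply Rabs_triang|]. eapply Rle_trans; [apply Rplus_le_compat_r, Rabs_triang|].
  rewrite Rabs_Ropp. lra.
Qed.

Lemma flow_cont y t : continuity_pt (flow y) t.
Proof.
  apply continuity_pt_cont_in. intros eps Heps.
  exists (eps / (B + 1)). split; [apply Rdiv_lt_0_compat; pose proof B_ge0; lra|].
  intros s _ Hs. eapply Rle_lt_trans; [apply flow_lip|].
  apply Rle_lt_trans with ((B + 1) * Rabs (s - t)); [pose proof (Rabs_pos (s - t)); nra|].
  apply Rmult_lt_reg_l with (/ (B + 1)); [apply Rinv_0_lt_compat; pose proof B_ge0; lra|].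
  rewrite <- Rmult_assoc, Rinv_l, Rmult_1_l by (pose proof B_ge0; lra). unfold Rdiv in Hs. lra.
Qed.

Lemma flow_integral y t : 0 <= t <= T ->
  flow y t = y + RInt (fun s => velocity_ext s (flow y s)) 0 t.
Proof.
  intros Ht. set (I := RInt (fun s => velocity_ext s (flow y s)) 0 t).
  apply eq_of_Rabs_le_0.
  apply (le_of_le_half_pow _ _ (2 * K + 2 * K * M * T)). intros n.
  pose proof (flow_picard y (S n) t) as Happrox.
  rewrite (clamp_id 0 T t Ht), picard_S in Happrox.
  assert (Hint : Rabs (RInt (fun s => velocity_ext s (picard y n s)) 0 t - I)
                 <= M * (2 * K * (/ 2) ^ n) * Rabs (t - 0)).
  { unfold I. rewrite RInt_minus_R by (apply ex_RInt_continuity_pt, velocity_ext_comp_cont;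
      first [apply picard_cont|apply flow_cont]).
    apply abs_RInt_le_const_abs.
    - intros z _. apply continuity_pt_filterlim, continuity_pt_minus; apply velocity_ext_comp_cont;
        [apply picard_cont|apply flow_cont].
    - intros z Hz. rewrite Rmin_left, Rmax_right in Hz by lra.
      eapply Rle_trans; [apply velocity_ext_lip|]. apply Rmult_le_compat_l; [exact M_ge0|].
      rewrite Rabs_minus_sym. replace z with (clamp 0 T z) at 2 by (apply clamp_id; lra).
      apply flow_picard. }
  rewrite Rminus_0_r, (Rabs_pos_eq t) in Hint by lra.
  assert (2 * K * (/ 2) ^ S n <= 2 * K * (/ 2) ^ n) by (apply Rmult_le_compat_l; [lra|apply half_pow_S_le]).
  assert (M * (2 * K * (/ 2) ^ n) * t <= 2 * K * M * T * (/ 2) ^ n).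
  { pose proof (pow_le (/ 2) n ltac:(lra)).
    replace (2 * K * M * T * (/ 2) ^ n) with (M * (2 * K * (/ 2) ^ n) * T) by ring.
    apply Rmult_le_compat_l; [|lra]. apply Rmult_le_pos; [exact M_ge0|nra]. }
  replace (flow y t - (y + I)) with ((flow y t - (y + RInt (fun s => velocity_ext s (picard y n s)) 0 t))
    + (RInt (fun s => velocity_ext s (picard y n s)) 0 t - I)) by ring.
  eapply Rle_trans; [apply Rabs_triang|]. lra.
Qed.

Lemma flow_0 y : flow y 0 = y.
Proof.
  rewrite flow_integral by lra. rewrite (RInt_point (V := R_CompleteNormedModule)).
  apply Rplus_0_r.
Qed.

Lemma flow_deriv y t : 0 < t < T -> is_derive (flow y) t (velocity_ext t (flow y t)).
Proof.
  intros Ht.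
  apply (is_derive_ext_loc (fun u => y + RInt (fun s => velocity_ext s (flow y s)) 0 u)).
  - exists (mkposreal _ (Rmin_pos t (T - t) ltac:(lra) ltac:(lra))). intros u Hu.
    change (Rabs (u - t) < Rmin t (T - t)) in Hu. apply Rabs_def2 in Hu.
    pose proof (Rmin_l t (T - t)). pose proof (Rmin_r t (T - t)).
    symmetry. apply flow_integral. lra.
  - apply is_derive_const_plus, (is_derive_RInt_upper (fun s => velocity_ext s (flow y s))).
    apply velocity_ext_comp_cont, flow_cont.
Qed.

Lemma flow_order y z t : (forall s, velocity_ext s z = 0) -> 0 <= t <= T ->
  (z <= y -> z <= flow y t) /\ (y <= z -> flow y t <= z).
Proof.
  intros Hz Ht.
  assert (Hlip : forall X1 X2 s, 0 < s < T ->
    Rabs (velocity_ext s (X1 s) - velocity_ext s (X2 s)) <= M * Rabs (X1 s - X2 s))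
    by (intros; apply velocity_ext_lip).
  assert (Hflow_cont : forall s, 0 <= s <= T -> cont_in (in_0T T) (flow y) s)
    by (intros s _; apply cont_in_continuity_pt, flow_cont).
  assert (Hz_cont : forall s, 0 <= s <= T -> cont_in (in_0T T) (fun _ => z) s)
    by (intros s _; apply cont_in_continuity_pt, continuity_pt_const; intros p q; reflexivity).
  assert (Hz_deriv : forall s, 0 < s < T -> is_derive (fun _ => z) s (velocity_ext s z))
    by (intros s _; rewrite Hz; apply (is_derive_const (K := R_AbsRing) (V := R_NormedModule))).
  split; intros Hyz.
  - apply (ode_order T M velocity_ext (flow y) (fun _ => z) M_ge0 (Hlip _ _) Hflow_cont Hz_cont
             (flow_deriv y) Hz_deriv t Ht).
    now rewrite flow_0.
  - apply (ode_order T M velocity_ext (fun _ => z) (flow y) M_ge0 (Hlip _ _) Hz_cont Hflow_cont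
             Hz_deriv (flow_deriv y) t Ht).
    now rewrite flow_0.
Qed.

Lemma flow_range y t : - PI <= y <= PI -> 0 <= t <= T -> - PI <= flow y t <= PI.
Proof.
  intros Hy Ht. split.
  - apply (proj1 (flow_order y (- PI) t velocity_ext_left Ht)). lra.
  - apply (proj2 (flow_order y PI t velocity_ext_right Ht)). lra.
Qed.

Lemma flow_characteristic y : - PI <= y <= PI -> characteristic T a y (flow y).
Proof.
  intros Hy. split; [apply flow_0|split; [|split]].
  - intros t _. apply cont_in_filterlim, cont_in_continuity_pt, flow_cont.
  - intros t Ht. now apply flow_range.
  - intros t Ht. pose proof (flow_deriv y t Ht) as Hd. unfold velocity_ext in Hd.
    rewrite (clamp_id 0 T t), (clamp_id (- PI) PI (flow y t)) in Hd by (try apply flow_range; lra).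
    exact Hd.
Qed.

(** * The characteristic of the maximum point *)

Section MaximumPoint.

Variables (x0 : R) (xs : R -> R).
Hypothesis x0_interior : - PI < x0 < PI.
Hypothesis x0_max : max_at a 0 x0.
Hypothesis xs_char : characteristic T a x0 xs.

Lemma xs_interior t : 0 <= t <= T -> - PI < xs t < PI.
Proof. exact (characteristic_interior xs x0 xs_char x0_interior t). Qed.

Let flow_char u : characteristic T a (clamp (- PI) PI u) (flow (clamp (- PI) PI u)).
Proof. apply flow_characteristic, clamp_x. Qed.

Lemma flow_clamp_cont t : 0 <= t <= T -> continuity (fun u => flow (clamp (- PI) PI u) t).
Proof.
  intros Ht u. apply continuity_pt_cont_in. intros eps Heps.
  set (E := exp (M * T)). assert (HE : 0 < E) by apply exp_pos.
  exists (eps / E). split; [now apply Rdiv_lt_0_compat|]. intros v _ Hv.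
  eapply Rle_lt_trans; [exact (characteristic_gap_le _ _ _ _ (flow_char v) (flow_char u) t Ht)|].
  assert (Rabs (clamp (- PI) PI v - clamp (- PI) PI u) <= Rabs (v - u))
    by (apply clamp_lip; pose proof PI_RGT_0; lra).
  assert (exp (M * t) <= E) by (apply exp_le_compat; nra).
  assert (Rabs (v - u) * E < eps)
    by (apply Rmult_lt_reg_r with (/ E); [now apply Rinv_0_lt_compat|];
        rewrite Rmult_assoc, Rinv_r, Rmult_1_r by lra; exact Hv).
  eapply Rle_lt_trans; [|eassumption].
  apply Rmult_le_compat; [apply Rabs_pos|left; apply exp_pos|assumption|assumption].
Qed.

(* By the intermediate value theorem every interior point lies on the
   characteristic of an interior point. *)
Lemma max_along_characteristic t : 0 <= t <= T -> max_at a t (xs t).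
Proof.
  intros Ht. pose proof PI_RGT_0.
  assert (Hend : forall e, e = - PI \/ e = PI -> flow e t = e).
  { intros e [->| ->]; [apply characteristic_left|apply characteristic_right];
      (exact Ht || apply flow_characteristic; lra). }
  intros x Hx. apply (continuous_le_on_closure (fun x => a t x) PI); [lra| |exact Hx|].
  { apply continuity_pt_filterlim, a_continuous_x. split; assumption. }
  intros z Hz.
  destruct (IVT_gen _ (- PI) PI z (flow_clamp_cont t Ht)) as [u [Hu Huz]].
  { rewrite !clamp_id, !Hend by lra. rewrite Rmin_left, Rmax_right; lra. }
  rewrite Rmin_left, Rmax_right in Hu by lra. rewrite clamp_id in Huz by lra.
  assert (Hu' : - PI < u < PI)
    by (split; apply Rnot_le_lt; intros Hle; rewrite (Hend u) in Huz by lra; lra).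
  rewrite <- Huz. apply (characteristic_order _ _ u x0); try assumption.
  - apply flow_characteristic. lra.
  - apply x0_max. lra.
Qed.

Lemma dX_zero_along_characteristic t : 0 <= t <= T -> dX a t (xs t) = 0.
Proof.
  intros Ht. pose proof (xs_interior t Ht).
  assert (Hex : ex_derive (fun y => a t y) (xs t)) by (apply (a_C1 t (xs t)); split; [exact Ht|lra]).
  unfold dX. rewrite <- (Derive_Reals (fun y => a t y) _ (ex_derive_Reals_0 _ _ Hex)).
  apply (deriv_maximum _ (- PI) PI); try lra.
  intros x H1 H2. apply max_along_characteristic; lra.
Qed.

Section NeighbouringCharacteristic.

Variables (Y : R -> R) (y : R).
Hypothesis Y_char : characteristic T a y Y.
Hypothesis y_interior : - PI < y < PI.
Hypothesis y_ne_x0 : y <> x0.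

Let gap s := Y s - xs s.
Let ratio s := (a s (Y s) - a s (xs s)) / (gap s * gap s).
Let rate s := a s (Y s) + a s (xs s) - 2 * ((velocity s (Y s) - velocity s (xs s)) / gap s).

Let gap_ne s : 0 <= s <= T -> gap s <> 0.
Proof. intros Hs. apply Rminus_eq_contra, (characteristic_ne Y xs y x0); assumption. Qed.

Let ratio_cont t : 0 <= t <= T -> cont_in (in_0T T) ratio t.
Proof.
  intros Ht. unfold ratio, Rdiv. apply cont_in_mult.
  - apply cont_in_minus; eapply cont_in_along_characteristic; eassumption.
  - assert (Hgap : cont_in (in_0T T) gap t)
      by (apply cont_in_minus; eapply characteristic_cont; eassumption).
    apply cont_in_inv; [now apply cont_in_mult|apply Rmult_integral_contrapositive; split; now apply gap_ne].
Qed.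

Let ratio_deriv s : 0 < s < T -> is_derive ratio s (rate s * ratio s).
Proof.
  intros Hs. assert (Hne := gap_ne s ltac:(lra)).
  assert (Hgap : is_derive gap s (velocity s (Y s) - velocity s (xs s)))
    by (apply is_derive_Rminus; [apply (proj2 (proj2 (proj2 Y_char)))|apply (proj2 (proj2 (proj2 xs_char)))]; exact Hs).
  eapply is_derive_eq; [apply is_derive_div|].
  - apply is_derive_Rminus; eapply riccati_along_characteristic; eassumption.
  - apply is_derive_Rmult; exact Hgap.
  - now apply Rmult_integral_contrapositive.
  - unfold rate, ratio. fold (gap s). field. split; [exact Hne|apply PI_neq0].
Qed.

Lemma rate_small eps del :
  (forall s z1 z2, 0 <= s <= T -> - PI <= z1 <= PI -> - PI <= z2 <= PI -> Rabs (z1 - z2) < del ->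
     Rabs (a s z1 - a s z2) <= eps) ->
  (forall s, 0 <= s <= T -> Rabs (Y s - xs s) < del) ->
  forall s, 0 <= s <= T -> Rabs (rate s) <= 3 * eps.
Proof.
  intros Hunif Hclose s Hs.
  assert (HY := characteristic_range Y y Y_char s Hs).
  assert (Hx := characteristic_range xs x0 xs_char s Hs).
  assert (Hdiff : Rabs (a s (Y s) - a s (xs s)) <= eps) by (apply Hunif; auto).
  assert (Hquot : Rabs ((velocity s (Y s) - velocity s (xs s)) / gap s - a s (xs s)) <= eps).
  { rewrite velocity_diff by assumption.
    set (I := RInt (fun z => a s z) (xs s) (Y s) : R).
    replace (I / gap s - a s (xs s)) with ((I - (Y s - xs s) * a s (xs s)) / gap s)
      by (unfold gap; field; now apply gap_ne).
    unfold Rdiv. rewrite Rabs_mult, Rabs_inv.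
    apply Rmult_le_reg_r with (Rabs (gap s)); [apply Rabs_pos_lt; now apply gap_ne|].
    rewrite Rmult_assoc, Rinv_l, Rmult_1_r by (apply Rabs_no_R0; now apply gap_ne).
    apply abs_RInt_minus_const_le; intros z Hz;
      pose proof (between_in_interval _ _ _ _ _ Hx HY Hz); pose proof (Rabs_between _ _ _ Hz).
    - now apply a_continuous_x.
    - apply Hunif; [assumption|assumption|assumption|]. specialize (Hclose s Hs). lra. }
  unfold rate.
  replace (a s (Y s) + a s (xs s) - 2 * ((velocity s (Y s) - velocity s (xs s)) / gap s))
    with ((a s (Y s) - a s (xs s)) - 2 * ((velocity s (Y s) - velocity s (xs s)) / gap s - a s (xs s)))
    by ring.
  eapply Rle_trans; [apply Rabs_triang|]. rewrite Rabs_Ropp, Rabs_mult, (Rabs_pos_eq 2) by lra. lra.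
Qed.

Lemma ratio_drift eps del : 0 <= eps ->
  (forall s z1 z2, 0 <= s <= T -> - PI <= z1 <= PI -> - PI <= z2 <= PI -> Rabs (z1 - z2) < del ->
     Rabs (a s z1 - a s z2) <= eps) ->
  (forall s, 0 <= s <= T -> Rabs (Y s - xs s) < del) ->
  forall t, 0 <= t <= T -> Rabs (ratio t - ratio 0) <= Rabs (ratio 0) * (exp (3 * eps * T) - 1).
Proof.
  intros Heps Hunif Hclose.
  apply (linear_ode_drift T (3 * eps) ratio rate); [lra|exact ratio_cont|exact ratio_deriv|].
  intros s Hs. apply (rate_small eps del Hunif Hclose). lra.
Qed.

End NeighbouringCharacteristic.

Lemma flow_near_xs del : 0 < del -> exists h0, 0 < h0 /\ forall h, 0 < h < h0 ->
  x0 + h < PI /\ forall s, 0 <= s <= T -> Rabs (flow (x0 + h) s - xs s) < del.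
Proof.
  intros Hdel. pose proof PI_RGT_0.
  set (E := exp (M * T)). assert (HE : 0 < E) by apply exp_pos.
  exists (Rmin (del / E) (PI - x0)). split; [apply Rmin_pos; [apply Rdiv_lt_0_compat|]; lra|].
  intros h Hh. pose proof (Rmin_l (del / E) (PI - x0)). pose proof (Rmin_r (del / E) (PI - x0)).
  split; [lra|]. intros s Hs.
  eapply Rle_lt_trans;
    [exact (characteristic_gap_le _ _ _ _ (flow_characteristic (x0 + h) ltac:(lra)) xs_char s Hs)|].
  replace (x0 + h - x0) with h by ring. rewrite Rabs_pos_eq by lra.
  apply Rle_lt_trans with (h * E); [apply Rmult_le_compat_l; [lra|apply exp_le_compat; nra]|].
  apply Rmult_lt_reg_r with (/ E); [now apply Rinv_0_lt_compat|].
  rewrite Rmult_assoc, Rinv_r, Rmult_1_r by lra. unfold Rdiv in *. lra.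
Qed.

Lemma ratio_witness t eta : 0 <= t <= T -> 0 < eta ->
  exists q0 qt, Rabs (q0 - dX (dX a) 0 x0 / 2) <= eta /\ Rabs (qt - dX (dX a) t (xs t) / 2) <= eta /\
    Rabs (qt - q0) <= Rabs q0 * (exp (eta * (3 * T)) - 1).
Proof.
  intros Ht Heta.
  assert (Hxs0 : xs 0 = x0) by apply xs_char.
  destruct (a_unif_cont eta Heta) as [du [Hdu Hunif]].
  destruct (taylor_at_critical 0 x0 ltac:(lra) x0_interior
              ltac:(rewrite <- Hxs0; apply dX_zero_along_characteristic; lra) eta Heta) as [d0 [Hd0 Htay0]].
  destruct (taylor_at_critical t (xs t) Ht (xs_interior t Ht) (dX_zero_along_characteristic t Ht) eta Heta)
    as [dt [Hdt Htayt]].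
  destruct (flow_near_xs (Rmin du dt) (Rmin_pos _ _ Hdu Hdt)) as [h0 [Hh0 Hnear]].
  set (h := Rmin h0 d0 / 2).
  assert (Hh : 0 < h < h0 /\ h < d0)
    by (unfold h; pose proof (Rmin_l h0 d0); pose proof (Rmin_r h0 d0); pose proof (Rmin_pos h0 d0 Hh0 Hd0); lra).
  destruct (Hnear h (proj1 Hh)) as [HhPI Hclose].
  set (Y := flow (x0 + h)) in Hclose.
  assert (HY : characteristic T a (x0 + h) Y) by (apply flow_characteristic; lra).
  assert (Hne : Y t - xs t <> 0)
    by (apply Rminus_eq_contra, (characteristic_ne Y xs (x0 + h) x0); [exact HY|exact xs_char|exact Ht|lra]).
  exists ((a 0 (Y 0) - a 0 (xs 0)) / ((Y 0 - xs 0) * (Y 0 - xs 0))).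
  exists ((a t (Y t) - a t (xs t)) / ((Y t - xs t) * (Y t - xs t))).
  split; [|split].
  - rewrite (proj1 HY), Hxs0. replace (x0 + h - x0) with h by ring. apply Htay0; [lra|rewrite Rabs_pos_eq; lra].
  - replace (Y t) with (xs t + (Y t - xs t)) at 1 by ring.
    apply Htayt; [exact Hne|]. pose proof (Hclose t Ht). pose proof (Rmin_r du dt). lra.
  - replace (eta * (3 * T)) with (3 * eta * T) by ring.
    apply (ratio_drift Y (x0 + h) HY ltac:(lra) ltac:(lra) eta (Rmin du dt)); [lra| |exact Hclose|exact Ht].
    intros s z1 z2 Hs Hz1 Hz2 Hz. left. apply Hunif; try (split; assumption).
    + now rewrite Rminus_diag, Rabs_R0.
    + pose proof (Rmin_l du dt). lra.
Qed.

Lemma dXX_along_characteristic t : 0 <= t <= T -> dX (dX a) t (xs t) = dX (dX a) 0 x0.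
Proof.
  intros Ht. apply (Rmult_eq_reg_r (/ 2)); [|lra].
  apply (eq_of_vanishing_drift _ _ (3 * T)). intros eta Heta.
  exact (ratio_witness t eta Ht Heta).
Qed.

End MaximumPoint.

End Solution.

Theorem corollary2p6 (T : R) (a : R -> R -> R) (x0 : R) :
  0 < T ->
  C2_on_rect T a ->
  solves_eq T a ->
  - PI < x0 < PI ->
  max_at a 0 x0 ->
  (exists xs, characteristic T a x0 xs) /\
  (forall xs, characteristic T a x0 xs ->
     forall t, 0 <= t <= T ->
       max_at a t (xs t) /\
       dX a t (xs t) = 0 /\
       dX (dX a) t (xs t) = dX (dX a) 0 x0).
Proof.
  intros HT HC HS Hx0 Hmax.
  destruct (a_bounded T a HC) as [M [HM0 HM]].
  split.
  - exists (flow T a x0). apply (flow_characteristic T a HC HS M HM0 HM HT). lra.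
  - intros xs Hxs t Ht. split; [|split].
    + exact (max_along_characteristic T a HC HS M HM0 HM HT x0 xs Hx0 Hmax Hxs t Ht).
    + exact (dX_zero_along_characteristic T a HC HS M HM0 HM HT x0 xs Hx0 Hmax Hxs t Ht).
    + exact (dXX_along_characteristic T a HC HS M HM0 HM HT x0 xs Hx0 Hmax Hxs t Ht).
Qed.
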